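(* Let $\mathcal{Q}$ be a $d$-GMK instance with time horizon $T$, let $U=\{u_0,\ldots,u_k\}$ be a set of cut points of $T$, let $\mathcal{Q}_U=(q_j)_{j=0}^{k-1}$ be the cut instances of $\mathcal{Q}$ w.r.t. $U$, and for each $j$ let $(S_t,\mathcal{A}_t)_{t=u_j}^{u_{j+1}-1}$ be a feasible solution for $q_j$. Then the cut solution $(S_t,\mathcal{A}_t)_{t=1}^{T}$ is a feasible solution for $\mathcal{Q}$, and $f_{\mathcal{Q}}\left((S_t)_{t=1}^T\right)\ \geq\ \sum_{j=0}^{k-1} f_{q_j}\left((S_t)_{t=u_j}^{u_{j+1}-1}\right).$
   Context: A Multiple Knapsack Constraint (MKC) over an item set $I$ is $K=(w,B,W)$ with weights $w:I\to\mathbb{R}_+$, a set of bins $B$ and capacities $W:B\to\mathbb{R}_+$; an assignment $A:B\to 2^I$ is feasible if $\sum_{i\in A(b)}w(i)\le W(b)$ for every bin $b$, and it is an assignment of $S$ if $S=\cup_{b\in B}A(b)$. A $d$-MKCP instance is $(I,\mathcal{K},p)$ with $\mathcal{K}$ a tuple of $d$ MKCs and $p:I\to\mathbb{R}_{\ge0}$; a feasible solution is a set $S\subseteq I$ together with a tuple $\mathcal{A}$ of feasible assignments of $S$, one per MKC. A $d$-GMK instance is $\mathcal{Q}=((\mathcal{P}_t)_{t=1}^T,g^+,g^-,c^+,c^-)$, where $\mathcal{P}_t=(I,\mathcal{K}_t,p_t)$ is a $d_t$-MKCP instance ($d_t\le d$), $g^+,g^-\in\mathbb{R}_+^{I\times[2,T]}$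 are gains and $c^+,c^-\in\mathbb{R}_+^{I\times[1,T]}$ are change costs. A feasible solution is $(S_t,\mathcal{A}_t)_{t=1}^T$ with $(S_t,\mathcal{A}_t)$ feasible for $\mathcal{P}_t$; with $S_0=S_{T+1}=\emptyset$ its value is $f_{\mathcal{Q}}((S_t)_{t=1}^T)=\sum_{t=1}^T\sum_{i\in S_t}p_t(i)+\sum_{t=2}^T\big(\sum_{i\in S_{t-1}\cap S_t}g^+_{i,t}+\sum_{i\notin S_{t-1}\cup S_t}g^-_{i,t}\big)-\sum_{t=1}^T\big(\sum_{i\in S_t\setminus S_{t-1}}c^+_{i,t}+\sum_{i\in S_t\setminus S_{t+1}}c^-_{i,t}\big)$. A set of cut points of $T$ is $U=\{u_0,\ldots,u_k\}$ of integers with $u_j<u_{j+1}$, $u_0=1$, $u_k=T+1$. The cut instances of $\mathcal{Q}$ w.r.t. $U$ are $q_j=((\mathcal{P}_t)_{t=u_j}^{u_{j+1}-1},g^+,g^-,c^+,c^-)$ for $j=0,\ldots,k-1$, i.e. the sub-instance on the stage range $[u_j,u_{j+1}-1]$ without shifting or truncating the gain and cost vectors; when evaluating a solution of the sub-instance on range $[t_1,t_2]$ by the same formula restricted to that range, one assumes $S_{t_1-1}=S_{t_2+1}=\emptyset$ (so entry costs $c^+$ at $t_1$ and exit costs $c^-$ at $t_2$ are charged, and gains at $t_1$ are not counted). Given feasible solutions $(S_t,\mathcal{A}_t)_{t=u_j}^{u_{j+1}-1}$ for each cut instance $q_j$, the concatenation $(S_t,\mathcal{A}_t)_{t=1}^T$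 is called the cut solution for $\mathcal{Q}$. *)

From mathcomp Require Import all_boot all_order all_algebra.
Set Implicit Arguments. Unset Strict Implicit. Unset Printing Implicit Defensive.
Import Order.TTheory GRing.Theory Num.Theory.
Local Open Scope ring_scope.

Section GMK.
Variables (I : finType) (R : realFieldType).

Record MKC := mkMKC {
  nbins : nat;
  wt : I -> R;
  cap : 'I_nbins -> R
}.
Arguments cap : clear implicits.

Definition MKC_wf (K : MKC) := (forall i, 0 <= wt K i) /\ (forall b, 0 <= cap K b).

Definition assignment (K : MKC) := 'I_(nbins K) -> {set I}.

Definition feasible_assignment (K : MKC) (A : assignment K) :=
  forall b : 'I_(nbins K), \sum_(i in A b) wt K i <= cap K b.

Definition assignment_of (K : MKC) (A : assignment K) (S : {set I}) :=
  S = \bigcup_(b < nbins K) A b.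

Record MKCP := mkMKCP {
  cons : seq MKC;
  prof : I -> R
}.

Definition MKCP_wf (d : nat) (P : MKCP) :=
  size (cons P) = d /\ (forall k : 'I_(size (cons P)), MKC_wf (tnth (in_tuple (cons P)) k))
  /\ (forall i, 0 <= prof P i).

Definition assignments (Ks : seq MKC) :=
  forall k : 'I_(size Ks), assignment (tnth (in_tuple Ks) k).

Definition MKCP_feasible (P : MKCP) (S : {set I}) (As : assignments (cons P)) :=
  forall k : 'I_(size (cons P)),
    feasible_assignment (As k) /\ assignment_of (As k) S.

(* A d-GMK instance ((P_t)_t, g+, g-, c+, c-); stages are indexed by t in [1,T]. *)
Record GMK := mkGMK {
  stage : nat -> MKCP;
  gplus : I -> nat -> R;
  gminus : I -> nat -> R;
  cplus : I -> nat -> R;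
  cminus : I -> nat -> R
}.

Definition GMK_wf (d T : nat) (Q : GMK) :=
  (forall t, (1 <= t <= T)%N ->
     exists dt, (dt <= d)%N /\ MKCP_wf dt (stage Q t))
  /\ (forall i t, (2 <= t <= T)%N -> 0 <= gplus Q i t /\ 0 <= gminus Q i t)
  /\ (forall i t, (1 <= t <= T)%N -> 0 <= cplus Q i t /\ 0 <= cminus Q i t).

Definition GMK_feasible (Q : GMK) (t1 t2 : nat) (S : nat -> {set I})
    (As : forall t, assignments (cons (stage Q t))) :=
  forall t, (t1 <= t <= t2)%N -> MKCP_feasible (S t) (As t).

(* Value of (S_t)_{t=t1}^{t2} for the instance Q restricted to [t1, t2],
   with S_{t1-1} = S_{t2+1} = emptyset. *)
Definition GMK_value (Q : GMK) (t1 t2 : nat) (S : nat -> {set I}) : R :=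
  let S' := fun t => if (t1 <= t <= t2)%N then S t else set0 in
  \sum_(t1 <= t < t2.+1) \sum_(i in S' t) prof (stage Q t) i
  + \sum_(t1.+1 <= t < t2.+1)
      (\sum_(i in S' t.-1 :&: S' t) gplus Q i t
       + \sum_(i in ~: (S' t.-1 :|: S' t)) gminus Q i t)
  - \sum_(t1 <= t < t2.+1)
      (\sum_(i in S' t :\: S' t.-1) cplus Q i t
       + \sum_(i in S' t :\: S' t.+1) cminus Q i t).

Definition cut_points (T : nat) (u : seq nat) :=
  sorted ltn u /\ nth 0%N u 0 = 1%N /\ last 0%N u = T.+1.

End GMK.
Arguments GMK_feasible {I R} Q t1 t2 S As.

From mathcomp Require Import all_boot all_order all_algebra.
From mathcomp Require Import lra zify.
Set Implicit Arguments. Unset Strict Implicit. Unset Printing Implicit Defensive.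

Import Order.TTheory GRing.Theory Num.Theory.
Local Open Scope ring_scope.

(* Cutting the horizon at a stage m affects the objective only at the boundary:
   the cut solution forgoes the gain of stage m, and the two cut instances
   additionally charge the exit costs at m-1 and the entry costs at m. Gains
   and costs are nonnegative, so the whole is worth at least the sum of its
   pieces; induction over the cut points gives the claim, and feasibility is
   stagewise. *)

Lemma ler_sum_subset (I : finType) (R : numDomainType) (A B : {set I}) (F : I -> R) :
  A \subset B -> (forall i, 0 <= F i) -> \sum_(i in A) F i <= \sum_(i in B) F i.
Proof.
move=> subAB F_ge0; rewrite [leRHS](big_setID A) /= (setIidPr subAB) lerDl.
exact: sumr_ge0.
Qed.

Section CutSolution.
Variables (I : finType) (R : realFieldType) (Q : GMK I R) (S : nat -> {set I}).

Definition restr (a b t : nat) : {set I} := if (a <= t <= b)%N then S t else set0.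

Definition profit_at (X : nat -> {set I}) t := \sum_(i in X t) prof (stage Q t) i.

Definition gain_at (X : nat -> {set I}) t :=
  \sum_(i in X t.-1 :&: X t) gplus Q i t + \sum_(i in ~: (X t.-1 :|: X t)) gminus Q i t.

Definition cost_at (X : nat -> {set I}) t :=
  \sum_(i in X t :\: X t.-1) cplus Q i t + \sum_(i in X t :\: X t.+1) cminus Q i t.

Lemma restr_in a b t : (a <= t <= b)%N -> restr a b t = S t.
Proof. by rewrite /restr => ->. Qed.

Lemma restr_sub a b a' b' t :
  (a <= a')%N -> (b' <= b)%N -> restr a' b' t \subset restr a b t.
Proof.
rewrite /restr => le_aa' le_b'b; case: ifP => [/andP[? ?] | _]; last exact: sub0set.
by rewrite ifT ?subxx //; apply/andP; split; lia.
Qed.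

Lemma GMK_valueE a b : GMK_value Q a b S =
  \sum_(a <= t < b.+1) profit_at S t + \sum_(a.+1 <= t < b.+1) gain_at S t
  - \sum_(a <= t < b.+1) cost_at (restr a b) t.
Proof.
congr (_ + _ - _).
- by apply: eq_big_nat => t t_ab; rewrite /profit_at -/(restr a b t) restr_in.
- apply: eq_big_nat => t /andP[? ?]; rewrite /gain_at -!/(restr a b _).
  by rewrite !restr_in //; apply/andP; split; lia.
Qed.

Lemma GMK_value_nil a b : (b < a)%N -> GMK_value Q a b S = 0.
Proof. by move=> lt_ba; rewrite GMK_valueE !big_geq // ?subr0 ?addr0 //; lia. Qed.

Lemma cost_at_restr_le a b a' b' t :
  (a <= a')%N -> (b' <= b)%N -> (a' <= t <= b')%N ->
  (forall i, 0 <= cplus Q i t /\ 0 <= cminus Q i t) ->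
  cost_at (restr a b) t <= cost_at (restr a' b') t.
Proof.
move=> le_aa' le_b'b /andP[? ?] c_ge0.
rewrite /cost_at; have ->: restr a b t = restr a' b' t.
  by rewrite !restr_in //; apply/andP; split; lia.
by apply: lerD; apply: ler_sum_subset; rewrite ?setDS ?restr_sub // => i; case: (c_ge0 i).
Qed.

Variable T : nat.
Hypothesis gains_ge0 :
  forall i t, (2 <= t <= T)%N -> 0 <= gplus Q i t /\ 0 <= gminus Q i t.
Hypothesis costs_ge0 :
  forall i t, (1 <= t <= T)%N -> 0 <= cplus Q i t /\ 0 <= cminus Q i t.

Lemma GMK_value_split a m b : (0 < a)%N -> (a < m <= b.+1)%N -> (b <= T)%N ->
  GMK_value Q a m.-1 S + GMK_value Q m b S <= GMK_value Q a b S.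
Proof.
move=> a_gt0 /andP[lt_am le_mb1] b_le_T.
have [le_mb | lt_bm] := leqP m b; last first.
  have -> : m = b.+1 by lia.
  by rewrite (GMK_value_nil (ltnSn b)) addr0.
rewrite !GMK_valueE (prednK (ltn_trans a_gt0 lt_am)).
have le_am : (a <= m)%N by lia.
rewrite (big_cat_nat le_am le_mb1) /= (big_cat_nat (lt_am : a.+1 <= m)%N le_mb1) /=.
rewrite [\sum_(m <= t < b.+1) gain_at S t](big_ltn (le_mb : m < b.+1)%N).
rewrite (big_cat_nat le_am le_mb1) /=.
have gain_m_ge0 : 0 <= gain_at S m.
  by apply: addr_ge0; apply: sumr_ge0 => i _; case: (gains_ge0 i (t := m)) => //; lia.
have cost_le a' b' t : (a <= a' <= t)%N -> (t <= b' <= b)%N ->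
    cost_at (restr a b) t <= cost_at (restr a' b') t.
  move=> /andP[? ?] /andP[? ?]; apply: cost_at_restr_le => //; first (apply/andP; lia).
  by move=> i; apply: costs_ge0; apply/andP; lia.
have: \sum_(a <= t < m) cost_at (restr a b) t <= \sum_(a <= t < m) cost_at (restr a m.-1) t.
  by apply: ler_sum_nat => t /andP[? ?]; apply: cost_le; apply/andP; lia.
have: \sum_(m <= t < b.+1) cost_at (restr a b) t <= \sum_(m <= t < b.+1) cost_at (restr m b) t.
  by apply: ler_sum_nat => t /andP[? ?]; apply: cost_le; apply/andP; lia.
lra.
Qed.

Lemma GMK_value_cuts x s : (0 < x)%N -> path ltn x s -> (last x s <= T.+1)%N ->
  \sum_(j < size s) GMK_value Q (nth 0%N (x :: s) j) (nth 0%N (x :: s) j.+1).-1 S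
    <= GMK_value Q x (last x s).-1 S.
Proof.
elim: s x => [|y s IH] x x_gt0 /=.
  by rewrite big_ord0 GMK_value_nil // prednK.
move=> /andP[lt_xy path_s] last_le; rewrite big_ord_recl /=.
have le_y_last : (y <= last y s)%N.
  have /allP lt_y := order_path_min ltn_trans path_s.
  by case/predU1P: (mem_last y s) => [-> // | /lt_y/ltnW].
apply: le_trans (GMK_value_split (m := y) x_gt0 _ _); last by lia.
  by rewrite lerD2l; apply: IH => //; lia.
by apply/andP; split; lia.
Qed.
End CutSolution.

Lemma GMK_feasible_cuts (I : finType) (R : realFieldType) (Q : GMK I R) S As x s :
  (0 < x)%N -> path ltn x s ->
  (forall j, (j < size s)%N ->
     GMK_feasible Q (nth 0%N (x :: s) j) (nth 0%N (x :: s) j.+1).-1 S As) ->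
  GMK_feasible Q x (last x s).-1 S As.
Proof.
elim: s x => [|y s IH] x x_gt0 /=; first by move=> _ _ t /andP[? ?]; lia.
move=> /andP[lt_xy path_s] feas t /andP[le_xt le_t_last].
have [lt_ty | le_yt] := ltnP t y.
  by apply: (feas 0%N isT t); apply/andP; split=> /=; lia.
apply: (IH y _ path_s _ t); [lia | move=> j; exact: (feas j.+1) | exact/andP].
Qed.

Theorem corollary13 (I : finType) (R : realFieldType) (d T : nat)
    (Q : GMK I R) (u : seq nat)
    (S : nat -> {set I}) (As : forall t, assignments (cons (stage Q t))) :
  GMK_wf d T Q ->
  cut_points T u ->
  (forall j, (j < (size u).-1)%N ->
     GMK_feasible Q (nth 0%N u j) (nth 0%N u j.+1).-1 S As) ->
  GMK_feasible Q 1 T S As /\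
  GMK_value Q 1 T S >=
    \sum_(j < (size u).-1) GMK_value Q (nth 0%N u j) (nth 0%N u j.+1).-1 S.
Proof.
move=> [_ [gains_ge0 costs_ge0]] [sorted_u [u0 uT]].
case: u u0 sorted_u uT => [|x s] //= -> path_s uT feas.
rewrite -[T]/(T.+1.-1) -uT; split.
  exact: GMK_feasible_cuts (ltn0Sn 0) path_s feas.
exact (GMK_value_cuts S gains_ge0 costs_ge0 (ltn0Sn 0) path_s (eq_leq uT)).
Qed.
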